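(* Let $p\geqslant 2$ be a prime number and let $P(x)\in\mathbb{Q}[x]$ be a polynomial of degree $d$, written as $P(x)=\sum_{i=0}^{d}\frac{b_i}{c_i}x^i$ with $b_i,c_i\in\mathbb{Z}$, $c_i\neq 0$, $\gcd(b_i,c_i)=1$. Let $\gamma\in\mathbb{Z}$, and for $i\in\{0,\dots,d\}$ write $P(\gamma+i)=\frac{r_i}{q_i}$ with $r_i,q_i\in\mathbb{Z}$, $q_i\neq 0$, $\gcd(r_i,q_i)=1$. Suppose $r_0\equiv r_1\equiv\dots\equiv r_d\equiv 0\pmod p$ and $d<p$. Then $b_0\equiv b_1\equiv\dots\equiv b_d\equiv 0\pmod p$. *)

From mathcomp Require Import all_boot all_order all_algebra.
Set Implicit Arguments. Unset Strict Implicit. Unset Printing Implicit Defensive.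

From HB Require Import structures.
From mathcomp Require Import all_boot all_order all_algebra ring zify.
Import Order.TTheory GRing.Theory Num.Theory.
Local Open Scope ring_scope.

(* Lagrange interpolation at the nodes gamma, ..., gamma + d writes P as
   \sum_j P(gamma + j) L_j, and the only denominators in the L_j are the
   differences j - k with 0 < |j - k| <= d < p, which are prime to p.  Hence
   the L_j have coefficients in the local ring Z_(p); as every value
   P(gamma + j) lies in p Z_(p), so does every coefficient b_i / c_i of P,
   and then p divides b_i. *)

Section PIntegral.

Variable p : nat.

(* For prime p this is Z_(p); for any p it is the localization of Z at the
   integers prime to p. *)
Definition p_integral : qualifier 1 rat :=
  [qualify a x : rat | coprime p `|denq x|].

Lemma p_integral_frac (a b : int) :
  b != 0 -> coprime p `|b| -> a%:~R / b%:~R \is a p_integral.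
Proof.
move=> b_neq0 p_b; rewrite qualifE /=; apply: coprime_dvdr p_b.
set x := a%:~R / b%:~R.
have xbE : (numq x * b = a * denq x)%R.
  apply: (@intr_inj rat); rewrite !rmorphM /= numqE /x.
  by rewrite mulrAC divfK ?intr_eq0 // mulrC.
have : (denq x %| numq x * b)%Z by rewrite xbE dvdz_mull.
by rewrite Gauss_dvdzr // coprimez_sym; apply: coprime_num_den.
Qed.

Lemma p_integral_invz (b : int) :
  b != 0 -> coprime p `|b| -> b%:~R^-1 \is a p_integral.
Proof. by move=> b_neq0 p_b; rewrite -div1r (p_integral_frac 1). Qed.

Lemma p_integralP x :
  reflect (exists a b : int, [/\ b != 0, coprime p `|b| & x = a%:~R / b%:~R])
          (x \is a p_integral).
Proof.
apply: (iffP idP) => [p_x | [a [b [b_neq0 p_b ->]]]]; last exact: p_integral_frac.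
by exists (numq x), (denq x); rewrite denq_neq0 divq_num_den.
Qed.

Fact p_integral_subring_closed : subring_closed p_integral.
Proof.
split=> [|_ _ /p_integralP[a1 [b1 [b1_neq0 p_b1 ->]]]
             /p_integralP[a2 [b2 [b2_neq0 p_b2 ->]]]
        |_ _ /p_integralP[a1 [b1 [b1_neq0 p_b1 ->]]]
             /p_integralP[a2 [b2 [b2_neq0 p_b2 ->]]]].
- by rewrite qualifE /= coprimen1.
- have -> : a1%:~R / b1%:~R - a2%:~R / b2%:~R
            = (a1 * b2 - a2 * b1)%:~R / (b1 * b2)%:~R :> rat.
    by rewrite rmorphB !rmorphM /=; field; rewrite !intr_eq0 b1_neq0 b2_neq0.
  by apply: p_integral_frac; rewrite ?mulf_neq0 // abszM coprimeMr p_b1.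
- rewrite mulf_div -!rmorphM /=.
  by apply: p_integral_frac; rewrite ?mulf_neq0 // abszM coprimeMr p_b1.
Qed.

HB.instance Definition _ :=
  GRing.isSubringClosed.Build rat _ p_integral_subring_closed.

End PIntegral.

Section LagrangeOverSubring.

Variables (K : fieldType) (S : subringClosed K) (n : nat) (x : nat -> K).
Hypotheses (n_gt0 : (0 < n)%N) (x_inj : injective x).
Hypothesis x_in : forall k : 'I_n, x k \in S.
Hypothesis subxV_in : forall j k : 'I_n, j != k -> (x j - x k)^-1 \in S.

Lemma lagrange_polyOver (i : 'I_n) :
  (tnth (n.-lagrange x) i : {poly K}) \is a polyOver S.
Proof.
rewrite (lagrangeE n_gt0 x_inj); apply: rpredM; last first.
  by apply: rpred_prod => k _; rewrite polyOverXsubC.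
rewrite polyOverC horner_prod -prodfV; apply: rpred_prod => k k_neq_i.
by rewrite hornerXsubC subxV_in // eq_sym.
Qed.

Lemma polyOver_of_samples (P : {poly K}) :
  (size P <= n)%N -> (forall i : 'I_n, P.[x i] \in S) -> P \is a polyOver S.
Proof.
move=> size_P P_x; rewrite (lagrange_gen n_gt0 x_inj size_P).
by apply: rpred_sum => i _; rewrite rpredM ?polyOverC ?lagrange_polyOver.
Qed.

End LagrangeOverSubring.

Lemma prime_coprime_sub (p j k : nat) :
  prime p -> (j < p)%N -> (k < p)%N -> j != k -> coprime p `|j%:Z - k%:Z|.
Proof.
move=> p_prime j_lt_p k_lt_p j_neq_k; rewrite prime_coprime // gtnNdvd //.
  by rewrite absz_gt0 subr_eq0 eqz_nat.
lia.
Qed.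

Section PrimeDenominators.

Variables (p : nat) (p_prime : prime p).

Lemma p_integral_divp (r q : int) :
  q != 0 -> (p%:Z %| r)%Z -> coprimez r q ->
  p%:R^-1 * (r%:~R / q%:~R) \is a p_integral p.
Proof.
move=> q_neq0 /dvdzP[k ->] r_q.
have p_neq0 : p%:R != 0 :> rat by rewrite pnatr_eq0 -lt0n prime_gt0.
have -> : p%:R^-1 * ((k * p)%:~R / q%:~R) = k%:~R / q%:~R :> rat.
  by rewrite rmorphM /= pmulrn; field; rewrite p_neq0 intr_eq0 q_neq0.
apply: p_integral_frac; rewrite // prime_coprime //; apply: contraL r_q => p_q.
by rewrite coprimezMl [coprimez p%:Z _]coprimezE /= prime_coprime // p_q andbF.
Qed.

Lemma dvdz_of_p_integral (m n : int) :
  n != 0 -> p%:R^-1 * (m%:~R / n%:~R) \is a p_integral p -> (p%:Z %| m)%Z.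
Proof.
move=> n_neq0 /p_integralP[a [b [b_neq0 p_b ab_eq]]].
have p_neq0 : p%:R != 0 :> rat by rewrite pnatr_eq0 -lt0n prime_gt0.
have mb_eq : (m * b = p%:Z * a * n)%R.
  have : m%:~R / n%:~R = p%:R * a%:~R / b%:~R :> rat.
    by rewrite -mulrA -ab_eq mulVKf.
  move/eqP; rewrite eqr_div ?intr_eq0 // => /eqP mb_eq.
  by apply/eqP; rewrite -(eqr_int rat) !rmorphM /= mb_eq.
have : (p%:Z %| m * b)%Z by rewrite mb_eq -mulrA dvdz_mulr.
by rewrite Gauss_dvdzl.
Qed.

End PrimeDenominators.

Theorem lemma3p3 (p : nat) (P : {poly rat}) (d : nat)
    (b c : nat -> int) (gamma : int) (r q : nat -> int) :
  prime p ->
  size P = d.+1 ->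
  (forall i, (i <= d)%N ->
     c i != 0 /\ coprimez (b i) (c i) /\ P`_i = (b i)%:~R / (c i)%:~R) ->
  (forall i, (i <= d)%N ->
     q i != 0 /\ coprimez (r i) (q i) /\
     P.[gamma%:~R + i%:R] = (r i)%:~R / (q i)%:~R) ->
  (forall i, (i <= d)%N -> (p%:Z %| r i)%Z) ->
  (d < p)%N ->
  forall i, (i <= d)%N -> (p%:Z %| b i)%Z.
Proof.
move=> p_prime size_P coef_P val_P p_dvd_r d_lt_p i le_id.
pose x k : rat := gamma%:~R + k%:R.
have x_inj : injective x by move=> j k /addrI /eqP; rewrite eqr_nat => /eqP.
have P_divp : p%:R^-1 *: P \is a polyOver (p_integral p).
  apply: (@polyOver_of_samples _ _ d.+1 x) => //.
  - by move=> k; rewrite rpredD ?rpred_int ?rpred_nat.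
  - move=> j k j_neq_k; have -> : x j - x k = (j%:Z - k%:Z)%:~R.
      by rewrite /x rmorphB /= opprD addrACA subrr add0r.
    have lt_p (l : 'I_d.+1) : (l < p)%N by apply: leq_trans d_lt_p.
    by rewrite p_integral_invz ?subr_eq0 ?eqz_nat // prime_coprime_sub ?lt_p.
  - by rewrite (leq_trans (size_scale_leq _ _)) ?size_P.
  - move=> j; have j_le_d : (j <= d)%N by rewrite -ltnS.
    have [q_neq0 [r_q valE]] := val_P j j_le_d.
    rewrite hornerZ [P.[_]]valE.
    by apply: p_integral_divp => //; apply: p_dvd_r.
have [c_neq0 [_ coefE]] := coef_P i le_id.
by move/polyOverP/(_ i): P_divp; rewrite coefZ coefE; apply: dvdz_of_p_integral.
Qed.
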